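(* Let $G$ be a finite group and $\Gamma$ a finite digraph with at least one arc such that $G\leq\mathrm{Aut}(\Gamma)$ acts primitively on the vertex set and transitively on the set of $s$-arcs of $\Gamma$ for some $s\geq 2$. Let $v$ be a vertex of $\Gamma$ and $G_v$ its stabiliser. Then for every prime $p$ dividing $|G_v|$, the group $G_v$ has at least two distinct subgroups of order $p$.
   Context: A digraph $\Gamma=(V,\to)$ consists of a finite vertex set $V$ and an anti-symmetric, irreflexive relation $\to$ on $V$. For $s\geq 0$, an $s$-arc is a sequence $v_0,\dots,v_s$ with $v_i\to v_{i+1}$ for $0\leq i<s$. $G$ is said to act transitively on $s$-arcs ($(G,s)$-arc-transitive) if it is transitive on the set of all $s$-arcs. *)

From mathcomp Require Import all_boot all_fingroup all_solvable.
Set Implicit Arguments. Unset Strict Implicit. Unset Printing Implicit Defensive.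
Local Open Scope group_scope.

Definition digraph (V : finType) (e : rel V) : Prop :=
  irreflexive e /\ (forall x y, e x y -> ~~ e y x).

Definition sarc (V : finType) (e : rel V) (s : nat) (w : seq V) : bool :=
  (size w == s.+1) && (if w is x :: w' then path e x w' else false).

Definition is_aut_group (V : finType) (e : rel V) (G : {set {perm V}}) : Prop :=
  forall g, g \in G -> forall x y, e (g x) (g y) = e x y.

Definition sarc_transitive (V : finType) (e : rel V) (G : {set {perm V}}) (s : nat) : Prop :=
  forall a b : seq V, sarc e s a -> sarc e s b ->
    exists2 g, g \in G & map g a = b.

From mathcomp Require Import all_boot all_fingroup all_solvable.
Local Open Scope group_scope.

(* Suppose, for a contradiction, that the vertex stabiliser G_v
   has exactly one subgroup P of order p.  Since G is vertex-transitive, every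
   stabiliser G_m is conjugate to G_v and so also has a unique subgroup of
   order p.  Take a 2-arc a -> m -> c.  Transitivity on 2-arcs shows that the
   arc stabiliser G_am is transitive on the out-neighbours of m, whence
   G_m = G_mc G_am; transitivity on arcs makes G_am and G_mc conjugate.  So
   |G_m| divides |G_am|^2, hence p divides |G_am| and |G_mc|, and the unique
   subgroup of order p of G_m lies in both: it fixes every in- and
   out-neighbour of m.  Propagating along the underlying undirected graph,
   which is connected because G is primitive, P fixes every vertex, so P = 1,
   contradicting |P| = p.
   The file first shows that s-arc-transitivity implies t-arc-transitivity
   for t <= s, then the connectivity of primitive digraphs, then the local
   argument at a 2-arc, and finally assembles the corollary. *)

Definition at_most_one_subgroup {gT : finGroupType} (A : {set gT}) (p : nat) :=
  forall H K : {group gT}, H \subset A -> K \subset A -> #|H| = p -> #|K| = p ->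
    H :=: K.

Lemma at_most_one_subgroupJ (gT : finGroupType) (A : {set gT}) p g :
  at_most_one_subgroup A p -> at_most_one_subgroup (A :^ g) p.
Proof.
move=> uniqA H K sHA sKA oH oK; apply: (@conjsg_inj _ g^-1).
by apply: uniqA; rewrite ?cardJg // sub_conjg invgK.
Qed.

Section SArcs.
Context {V : finType} {e : rel V}.

Lemma size_sarc {s a} : sarc e s a -> size a = s.+1.
Proof. by case/andP=> /eqP. Qed.

Hypothesis out_nbr : forall x, exists y, e x y.

Lemma walk_from k x : exists w, size w = k /\ path e x w.
Proof.
elim: k x => [|k IHk] x; first by exists [::].
have [y exy] := out_nbr x; have [w [sw pw]] := IHk y.
by exists (y :: w); rewrite /= exy sw.
Qed.

Lemma sarc_prolong {t s a} : t <= s -> sarc e t a -> exists w, sarc e s (a ++ w).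
Proof.
case: a => [|x a] le_ts; first by [].
case/andP=> /eqP [sz] pa; have [w [sw pw]] := walk_from (s - t) (last x a).
by exists w; rewrite /sarc /= size_cat sw sz subnKC // eqxx cat_path pa pw.
Qed.

Lemma sarc_transitive_le {G : {set {perm V}}} {t s} :
  t <= s -> sarc_transitive e G s -> sarc_transitive e G t.
Proof.
move=> le_ts st a b ta tb.
have [wa sa] := sarc_prolong le_ts ta; have [wb sb] := sarc_prolong le_ts tb.
have [g Gg] := st _ _ sa sb; rewrite map_cat => /eqP.
rewrite eqseq_cat; last by rewrite size_map (size_sarc ta) (size_sarc tb).
by case/andP=> /eqP gab _; exists g.
Qed.

End SArcs.

Definition adjacent {V : finType} (e : rel V) : rel V := [rel x y | e x y || e y x].

Section VertexTransitive.
Context {V : finType} {e : rel V} {G : {group {perm V}}}.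

Lemma stabE x g : (g \in 'C_G[x | 'P]) = (g \in G) && (g x == x).
Proof. by rewrite !inE sub1set inE. Qed.

Lemma stabJ x g : g \in G -> 'C_G[x | 'P] :^ g = 'C_G[g x | 'P].
Proof. by move=> Gg; rewrite conjIg conjGid // -astab1_act. Qed.

Lemma fix_all_trivial {P : {group {perm V}}} :
  (forall y, P \subset 'C_G[y | 'P]) -> P :=: 1.
Proof.
move=> fixP; apply/trivgP/subsetP=> g Pg; rewrite inE; apply/eqP/permP=> y.
by have /subsetP/(_ g Pg) := fixP y; rewrite stabE perm1 => /andP[_ /eqP].
Qed.

Hypothesis aut : is_aut_group e G.
Hypothesis vtr : [transitive G, on [set: V] | 'P].

Lemma neighbours : (exists x y, e x y) ->
  forall z, (exists y, e z y) /\ (exists y, e y z).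
Proof.
move=> [x [y exy]] z; split.
  have [g Gg ->] := atransP2 vtr (in_setT x) (in_setT z).
  by exists (g y); rewrite /= aut.
have [g Gg ->] := atransP2 vtr (in_setT y) (in_setT z).
by exists (g x); rewrite /= aut.
Qed.

Lemma connect_adjacent_sym : connect_sym (adjacent e).
Proof. by apply: sym_connect_sym => x y; rewrite /adjacent /= orbC. Qed.

Lemma connect_aut g x y : g \in G ->
  connect (adjacent e) (g x) (g y) = connect (adjacent e) x y.
Proof.
have img h u w : h \in G -> connect (adjacent e) u w ->
    connect (adjacent e) (h u) (h w).
  move=> Gh cuw; pose C := [pred z | connect (adjacent e) (h u) (h z)].
  have closedC : closed (adjacent e) C.
    apply: (intro_closed connect_adjacent_sym) => z z' adj Cz.
    by apply: connect_trans Cz (connect1 _); rewrite /adjacent /= !aut.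
  by have := closed_connect closedC cuw; rewrite !inE /= connect0 => <-.
move=> Gg; apply/idP/idP; last exact: img.
by move/(img _ _ _ (groupVr Gg)); rewrite !permK.
Qed.

(* A primitive group of automorphisms of a digraph with an arc forces the
   underlying graph to be connected: the setwise stabiliser of the component
   of v contains G_v, and cannot equal G_v since it moves v to a neighbour. *)
Lemma primitive_connected : irreflexive e -> (exists x y, e x y) ->
  [primitive G, on [set: V] | 'P] -> forall x y, connect (adjacent e) x y.
Proof.
move=> irr arc prim v.
pose C := [set y | connect (adjacent e) v y].
have stabC g : g \in G -> connect (adjacent e) v (g v) -> g \in 'N_G(C | 'P).
  move=> Gg cvg; rewrite inE Gg; apply/astabsP=> x; rewrite !inE /= apermE.
  by rewrite -(connect_aut g v x Gg) (same_connect connect_adjacent_sym cvg).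
have sGvN : 'C_G[v | 'P] \subset 'N_G(C | 'P).
  by apply/subsetP=> g; rewrite stabE => /andP[Gg /eqP gv]; rewrite stabC ?gv.
move: prim; rewrite (trans_prim_astab (in_setT v) vtr) => /maximal_eqP[_ max].
have [NGv | NG] := max _ sGvN (subsetIl _ _).
  have [[w evw] _] := neighbours arc v.
  have [g Gg wE] := atransP2 vtr (in_setT v) (in_setT w).
  have gvw : g v = w by rewrite wE.
  have /stabC : connect (adjacent e) v (g v).
    by rewrite connect1 // /adjacent /= gvw evw.
  by rewrite NGv stabE Gg gvw => /(_ isT) /eqP wv; rewrite wv irr in evw.
move=> y; have [g Gg ->] := atransP2 vtr (in_setT v) (in_setT y).
have : g \in 'N_G(C | 'P) by rewrite NG.
by rewrite inE => /andP[_ /astabsP/(_ v)]; rewrite !inE connect0.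
Qed.

(* Vertex stabilisers are all conjugate, so the uniqueness of a subgroup of
   order p transfers from one stabiliser to all of them. *)
Lemma at_most_one_subgroup_everywhere {v p} :
  at_most_one_subgroup 'C_G[v | 'P] p -> forall m, at_most_one_subgroup 'C_G[m | 'P] p.
Proof.
move=> uniqv m; have [g Gg ->] := atransP2 vtr (in_setT v) (in_setT m).
by rewrite -[_ _ g]/(g v) -stabJ //; apply: at_most_one_subgroupJ.
Qed.

Section TwoArcTransitive.
Hypothesis out_nbr : forall x, exists y, e x y.
Hypothesis st2 : sarc_transitive e G 2.

Lemma arc_transitive : sarc_transitive e G 1.
Proof. exact: (sarc_transitive_le out_nbr (_ : 1 <= 2) st2). Qed.

(* Consecutive arcs have conjugate, hence equally large, stabilisers. *)
Lemma arc_stab_card {a m c} : e a m -> e m c ->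
  #|'C_G[a | 'P] :&: 'C_G[m | 'P]| = #|'C_G[m | 'P] :&: 'C_G[c | 'P]|.
Proof.
move=> eam emc; have [||g Gg [ga gm]] := @arc_transitive [:: a; m] [:: m; c].
- by rewrite /sarc /= eam.
- by rewrite /sarc /= emc.
by rewrite -(cardJg _ g) conjIg !stabJ // ga gm.
Qed.

(* G_am is transitive on the out-neighbours of m, so G_m = G_mc G_am. *)
Lemma stab_factor {a m c} : e a m -> e m c ->
  'C_G[m | 'P] = ('C_G[m | 'P] :&: 'C_G[c | 'P]) * ('C_G[a | 'P] :&: 'C_G[m | 'P]).
Proof.
move=> eam emc; apply/eqP; rewrite eqEsubset andbC mul_subG ?subsetIl ?subsetIr //=.
apply/subsetP=> x; rewrite stabE => /andP[Gx /eqP xm].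
have emxc : e m (x c) by rewrite -{1}xm aut.
have [||g Gg [ga gm gc]] := st2 [:: a; m; c] [:: a; m; x c].
- by rewrite /sarc /= eam emc.
- by rewrite /sarc /= eam emxc.
apply/mulsgP; exists (x * g^-1) g; last by rewrite mulgKV.
  by rewrite inE !stabE groupM ?groupV //= !permM xm -{1}gm -gc !permK !eqxx.
by rewrite inE !stabE Gg ga gm !eqxx.
Qed.

Lemma prime_dvd_arc_stab {p a m c} : prime p -> e a m -> e m c ->
  p %| #|'C_G[m | 'P]| ->
  p %| #|'C_G[a | 'P] :&: 'C_G[m | 'P]| /\ p %| #|'C_G[m | 'P] :&: 'C_G[c | 'P]|.
Proof.
move=> pp eam emc pGm; rewrite -(arc_stab_card eam emc).
suff pA : p %| #|'C_G[a | 'P] :&: 'C_G[m | 'P]| by split.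
suff : p %| #|'C_G[a | 'P] :&: 'C_G[m | 'P]| ^ 2 by rewrite Euclid_dvdX // andbT.
rewrite expnS expn1 {1}(arc_stab_card eam emc).
by rewrite (mul_cardG ('C_G[m | 'P] :&: _)%G) -stab_factor // dvdn_mulr.
Qed.

(* The local step: the unique subgroup of order p of G_m fixes both ends of
   any 2-arc through m, since both arc stabilisers contain such a subgroup. *)
Lemma unique_subgroup_fixes_ends {p} {P : {group {perm V}}} {a m c} :
  prime p -> at_most_one_subgroup 'C_G[m | 'P] p ->
  P \subset 'C_G[m | 'P] -> #|P| = p -> e a m -> e m c ->
  P \subset 'C_G[a | 'P] /\ P \subset 'C_G[c | 'P].
Proof.
move=> pp uniq sPGm oP eam emc.
have pGm : p %| #|'C_G[m | 'P]| by rewrite -oP cardSg.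
have [pA pB] := prime_dvd_arc_stab pp eam emc pGm.
have [x Ax ox] := Cauchy pp pA; have [y By oy] := Cauchy pp pB.
case/setIP: Ax => xa xm; case/setIP: By => ym yc.
by split; [rewrite (uniq P <[x]>%G) | rewrite (uniq P <[y]>%G)]; rewrite ?cycle_subG.
Qed.

(* Assembling: a subgroup of order p of G_v cannot be the only one, for it
   would then fix every vertex reachable from v, i.e. every vertex. *)
Lemma not_unique_subgroup {p v} {P : {group {perm V}}} :
  irreflexive e -> (exists x y, e x y) -> [primitive G, on [set: V] | 'P] ->
  prime p -> P \subset 'C_G[v | 'P] -> #|P| = p ->
  ~ at_most_one_subgroup 'C_G[v | 'P] p.
Proof.
move=> irr arc prim pp sPGv oP uniqv.
have uniq := at_most_one_subgroup_everywhere uniqv.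
pose F := [pred y | P \subset 'C_G[y | 'P]].
have closedF : closed (adjacent e) F.
  apply: (intro_closed connect_adjacent_sym) => x y /orP[exy | eyx] Fx.
    have [_ [u eux]] := neighbours arc x.
    by have [] := unique_subgroup_fixes_ends pp (uniq x) Fx oP eux exy.
  have [[c exc] _] := neighbours arc x.
  by have [] := unique_subgroup_fixes_ends pp (uniq x) Fx oP eyx exc.
have fixP y : P \subset 'C_G[y | 'P].
  have := closed_connect closedF (primitive_connected irr arc prim v y).
  by rewrite !inE sPGv => <-.
by move: oP; rewrite (fix_all_trivial fixP) cards1 => p1; rewrite -p1 in pp.
Qed.

End TwoArcTransitive.
End VertexTransitive.

Theorem corollary2p8 (V : finType) (e : rel V) (G : {group {perm V}}) (s : nat) :
  digraph e ->
  (exists x y, e x y) ->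
  is_aut_group e G ->
  [primitive G, on [set: V] | 'P] ->
  2 <= s ->
  sarc_transitive e G s ->
  forall (v : V) (p : nat), prime p -> p %| #|'C_G[v | 'P]| ->
  exists H K : {group {perm V}},
    [/\ H \subset 'C_G[v | 'P], K \subset 'C_G[v | 'P],
        #|H| = p, #|K| = p & H :!=: K].
Proof.
move=> [irr _] arc aut prim s2 st v p pp pGv.
have vtr : [transitive G, on [set: V] | 'P] by case/andP: prim.
have out_nbr x := (neighbours aut vtr arc x).1.
have st2 := sarc_transitive_le out_nbr s2 st.
have [x Gv_x ox] := Cauchy pp pGv.
have sXGv : <[x]> \subset 'C_G[v | 'P] by rewrite cycle_subG.
case: (boolP [exists K : {group {perm V}},
                [&& K \subset 'C_G[v | 'P], #|K| == p & K :!=: <[x]>]]).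
  case/existsP=> K /and3P[sKGv /eqP oK neK].
  by exists <[x]>%G, K; split; rewrite // eq_sym.
move/existsPn=> noK; exfalso.
have onlyX (H : {group {perm V}}) :
    H \subset 'C_G[v | 'P] -> #|H| = p -> H :=: <[x]>.
  by move=> sHGv oH; apply/eqP; move: (noK H); rewrite sHGv oH eqxx negbK.
apply: (not_unique_subgroup aut vtr out_nbr st2 irr arc prim pp sXGv ox).
by move=> H K sH sK oH oK; rewrite (onlyX H) // (onlyX K).
Qed.
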